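(* Let $K$ be a commutative unital ring, $k<n$ in $\mathbb{N}^*$, and $\bar a,\bar b=(b_1,\dots,b_k),\bar c=(c_1,\dots,c_k)\in K^k$. Put $d_i:=b_ic_i$ ($1\le i\le k$), $\bar d:=(d_1,\dots,d_k)$, $d:=d_1\cdots d_k$, $U(i):=U_i(\pi^{\bar a,-\bar d}(k,k),d)$ for $i\in\mathbb{N}$, and write $n=mk+r$ with $0\le r<k$ (so $m\ge1$). Then \[\det T^k_n(\bar a,\bar b,\bar c)=U(m)\,\alpha^{\bar a,-\bar d}(k+r,k)-d\,U(m-1)\,\alpha^{\bar a,-\bar d}(r,k)\] \[=U(m+1)\,\alpha^{\bar a,-\bar d}(r,k)+d_kd_1\cdots d_r\,U(m)\,\alpha^{\bar a,-\bar d}_{r+1}(k-r-2,k).\] In particular, if $r=k-1$ then $\det T^k_{mk+k-1}(\bar a,\bar b,\bar c)=U(m+1)\,\det T^k_{k-1}(\bar a,\bar b,\bar c)=U(m+1)\alpha^{\bar a,-\bar d}(k-1,k)$.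
   Context: Vectors in $K^k$ are extended periodically ($a_{i+k}:=a_i$), $-\bar d$ componentwise. $T^k_n(\bar a,\bar b,\bar c)\in M_n(K)$ is the tridiagonal matrix with diagonal $a_1,\dots,a_n$, superdiagonal $b_1,\dots,b_{n-1}$, subdiagonal $c_1,\dots,c_{n-1}$, zeros elsewhere. $U_m(x,y):=\sum_{i=0}^{\lfloor (m-1)/2\rfloor}(-1)^i\binom{m-1-i}{i}x^{m-1-2i}y^i$ (so $U_0=0$, $U_1=1$). In $P=\mathbb{Z}[x_1,\dots,x_k,y_1,\dots,y_k]$, indices are periodic ($x_{i+k}:=x_i$, $y_{i+k}:=y_i$); shift $f_s:=f(x_{s+1},\dots,x_{s+k},y_{s+1},\dots,y_{s+k})$; for $\bar a,\bar e\in K^k$, $f^{\bar a,\bar e}$ is the image of $f$ under $x_i\mapsto a_i$, $y_i\mapsto e_i$, and $f_s^{\bar a,\bar e}:=(f_s)^{\bar a,\bar e}$. Write $[r]=\{1,\dots,r\}$, $S+1=\{s+1:s\in S\}$. For $0\le r\le k$, $\alpha(r,k):=\sum_{S}\prod_{i\in S}y_i\prod_{j\in[r]\setminus(S\cup(S+1))}x_j$ over subsets $S\subseteq\{1,\dots,r-1\}$ with no two consecutive integers; $\alpha(-1,k):=0$; for $r>k$, $\alpha(r,k):=x_r\alpha(r-1,k)+y_{r-1}\alpha(r-2,k)$; $\alpha_s(r,k):=(\alpha(r,k))_s$. $\beta(0,k)=\beta(1,k):=0$ and for $2\le r\le k+1$, $\beta(r,k):=\sum_S y_k\prod_{i\in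 S}y_i\prod_{j\in\{2,\dots,r-1\}\setminus(S\cup(S+1))}x_j$ over $S\subseteq\{2,\dots,r-2\}$ with no two consecutive integers. $\pi(r,k):=\alpha(r,k)+\beta(r,k)$ for $0\le r\le k$. *)

From HB Require Import structures.
From mathcomp Require Import all_boot all_order all_algebra.
Set Implicit Arguments. Unset Strict Implicit. Unset Printing Implicit Defensive.
Import Order.TTheory GRing.Theory Num.Theory.
Local Open Scope ring_scope.

Section Defs.
Variable K : comPzRingType.

(* periodic extension of a vector (a_1,...,a_k), 1-indexed: a_i := a_{((i-1) mod k) + 1} *)
Definition per (k : nat) (a : k.-tuple K) (i : nat) : K := nth 0 (val a) ((i.-1) %% k).

Definition memn (N : nat) (S : {set 'I_N}) (j : nat) : bool :=
  [exists i in S, (val i == j)].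

Definition nocons (N : nat) (S : {set 'I_N}) : bool :=
  [forall i in S, forall j in S, val j != (val i).+1].

(* alpha(r,k) for 0 <= r <= k, evaluated at x_i |-> x i, y_i |-> y i:
   sum over S subset of {1..r-1}, no two consecutive, of
   prod_{i in S} y_i * prod_{j in [r] \ (S u (S+1))} x_j *)
Definition alpha_base (x y : nat -> K) (r : nat) : K :=
  \sum_(S : {set 'I_r.+1} | [forall i in S, (0 < val i < r)%N] && nocons S)
     (\prod_(i in S) y (val i)) *
     \prod_(1 <= j < r.+1 | ~~ memn S j && ~~ memn S j.-1) x j.

Definition beta_base (x y : nat -> K) (k r : nat) : K :=
  if (r < 2)%N then 0 else
  \sum_(S : {set 'I_r.+1} | [forall i in S, (2 <= val i < r.-1)%N] && nocons S)
     y k * (\prod_(i in S) y (val i)) *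
     \prod_(2 <= j < r | ~~ memn S j && ~~ memn S j.-1) x j.

(* alpha_pair r = (alpha(r,k), alpha(r-1,k)), with alpha(-1,k) = 0, and the
   recursion alpha(r,k) = x_r alpha(r-1,k) + y_{r-1} alpha(r-2,k) for r > k *)
Fixpoint alpha_pair (x y : nat -> K) (k r : nat) : K * K :=
  match r with
  | 0 => (alpha_base x y 0, 0)
  | r'.+1 =>
      if (r'.+1 <= k)%N then (alpha_base x y r'.+1, alpha_base x y r')
      else let p := alpha_pair x y k r' in (x r'.+1 * p.1 + y r' * p.2, p.1)
  end.

Definition alpha (x y : nat -> K) (k r : nat) : K := (alpha_pair x y k r).1.
(* alpham1 k n = alpha(n-1,k) for n >= 0 (so alpham1 k 0 = alpha(-1,k) = 0) *)
Definition alpham1 (x y : nat -> K) (k n : nat) : K := (alpha_pair x y k n).2.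

Definition pi_ (x y : nat -> K) (k r : nat) : K := alpha x y k r + beta_base x y k r.

(* shifted sequence: used for f_s (x_i |-> x_{s+i}) *)
Definition shiftn (x : nat -> K) (s : nat) : nat -> K := fun i => x (s + i)%N.

Definition Ucheb (m : nat) (x y : K) : K :=
  if m is 0 then 0 else
  \sum_(i < (m.-1)./2.+1)
     (-1) ^+ i * ('C(m.-1 - i, i))%:R * x ^+ (m.-1 - i.*2) * y ^+ i.

Definition Tmat (k : nat) (a b c : k.-tuple K) (n : nat) : 'M[K]_n :=
  \matrix_(i < n, j < n)
    if val i == val j then per a (val i).+1
    else if val j == (val i).+1 then per b (val i).+1
    else if val i == (val j).+1 then per c (val j).+1
    else 0.

End Defs.

From HB Require Import structures.
From mathcomp Require Import all_boot all_order all_algebra.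
From mathcomp Require Import ring zify.
Set Implicit Arguments. Unset Strict Implicit. Unset Printing Implicit Defensive.
Import Order.TTheory GRing.Theory Num.Theory.
Local Open Scope ring_scope.

(* The proof views everything through second-order linear recurrences
   f(n+2) = X(n) f(n+1) + Y(n) f(n).  Choosing X(n) = a_(n+1) and
   Y(n) = -d_n (with Y(0) = -d_k) makes det T_n = A(n+1), where A and B are
   the fundamental solutions with initial values (0, 1) and (1, 0).
   1. For k-periodic coefficients, A(n + 2k) = tr * A(n + k) - det * A(n),
      where tr = A(k+1) + B(k) and det is the Casoratian A(k+1)B(k) - A(k)B(k+1)
      = d; hence along each residue class mod k the determinants satisfy the
      Chebyshev recurrence s(j+2) = tr s(j+1) - d s(j), solved by U_m.
   2. The non-consecutive subset sums alpha(r, k) and beta(r, k) satisfy the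
      continuant recurrence, so alpha(r, k) = A(r+1), beta(k, k) = B(k) and
      pi(k, k) = tr.
   3. The second formula rewrites alpha(k + r) - pi alpha(r) through the
      Casoratian identity, which yields the shifted alpha_(r+1)(k-r-2, k). *)

Section LinearRecurrence.
Variable K : comPzRingType.
Implicit Types (X Y f g : nat -> K) (u v : K).

Definition is_rsol X Y f := forall n, f n.+2 = X n * f n.+1 + Y n * f n.

Fixpoint rsol_pair X Y (f0 f1 : K) n : K * K :=
  if n is n'.+1 then let p := rsol_pair X Y f0 f1 n' in (p.2, X n' * p.2 + Y n' * p.1)
  else (f0, f1).

Definition rsol X Y (f0 f1 : K) n : K := (rsol_pair X Y f0 f1 n).1.

Lemma rsolP X Y (f0 f1 : K) : is_rsol X Y (rsol X Y f0 f1).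
Proof. by []. Qed.

Lemma rsol_unique X Y f g : is_rsol X Y f -> is_rsol X Y g ->
  f 0%N = g 0%N -> f 1%N = g 1%N -> f =1 g.
Proof.
move=> Hf Hg E0 E1 n; suff [] : f n = g n /\ f n.+1 = g n.+1 by [].
by elim: n => [|n [IH1 IH2]]; split; rewrite // Hf Hg IH1 IH2.
Qed.

Lemma is_rsol_lin X Y f g u v : is_rsol X Y f -> is_rsol X Y g ->
  is_rsol X Y (fun n => u * f n + v * g n).
Proof. by move=> Hf Hg n; rewrite Hf Hg; ring. Qed.

Lemma is_rsol_shift X Y f s : is_rsol X Y f ->
  is_rsol (fun n => X (s + n)%N) (fun n => Y (s + n)%N) (fun n => f (s + n)%N).
Proof. by move=> Hf n; rewrite !addnS Hf. Qed.

Lemma rsol_decomp X Y f : is_rsol X Y f ->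
  forall n, f n = f 1%N * rsol X Y 0 1 n + f 0%N * rsol X Y 1 0 n.
Proof.
move=> Hf; apply: rsol_unique => //; last by rewrite /rsol /=; ring.
  exact/is_rsol_lin/rsolP/rsolP.
by rewrite /rsol /=; ring.
Qed.

Section Fundamental.
Variables X Y : nat -> K.
Local Notation A := (rsol X Y 0 1).
Local Notation B := (rsol X Y 1 0).

Definition casor n := A n.+1 * B n - A n * B n.+1.

Lemma casor_prod n : casor n = \prod_(0 <= i < n) (- Y i).
Proof.
elim: n => [|n IH]; first by rewrite big_geq // /casor /rsol /=; ring.
by rewrite big_nat_recr //= -IH /casor !rsolP; ring.
Qed.

(* The combination of A and B vanishing at n is casor n times the
   fundamental solution of the recurrence shifted by n. *)
Lemma casor_shift n j :
  A (n + j)%N * B n - B (n + j)%N * A n =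
  casor n * rsol (fun i => X (n + i)%N) (fun i => Y (n + i)%N) 0 1 j.
Proof.
have Hs : is_rsol X Y (fun i => B n * A i + (- A n) * B i) by exact/is_rsol_lin/rsolP/rsolP.
have /= E := rsol_decomp (is_rsol_shift n Hs) j.
transitivity (B n * A (n + j)%N + - A n * B (n + j)%N); first ring.
by rewrite E addn0 addn1 /casor; ring.
Qed.

Variable k : nat.
Hypothesis X_period : forall n, X (n + k)%N = X n.
Hypothesis Y_period : forall n, Y (n + k)%N = Y n.

Lemma is_rsol_period f : is_rsol X Y f -> is_rsol X Y (fun n => f (n + k)%N).
Proof. by move=> Hf n; rewrite /= !addSn Hf X_period Y_period. Qed.

Lemma fund_shift_period (f0 f1 : K) n :
  rsol X Y f0 f1 (n + k) = rsol X Y f0 f1 k.+1 * A n + rsol X Y f0 f1 k * B n.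
Proof. by rewrite (rsol_decomp (is_rsol_period (rsolP X Y f0 f1)) n). Qed.

(* Shifting by two periods: the trace A(k+1) + B(k) and the determinant
   casor k of the monodromy matrix govern the sequence n -> A(n + jk). *)
Lemma period_step n : A (n + k + k)%N = (A k.+1 + B k) * A (n + k)%N - casor k * A n.
Proof. by rewrite !fund_shift_period /casor; ring. Qed.

End Fundamental.
End LinearRecurrence.

Section Chebyshev.
Variable K : comPzRingType.
Variables t d : K.

Definition cheb_term (m i : nat) : K :=
  (-1) ^+ i * ('C(m - i, i))%:R * t ^+ (m - i.*2) * d ^+ i.

Lemma cheb_term0 m : cheb_term m 0 = t ^+ m.
Proof. by rewrite /cheb_term !subn0 bin0 !expr0 !mulr1 mul1r. Qed.

Lemma cheb_term_small m i : (m < i.*2)%N -> cheb_term m i = 0.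
Proof. by move=> Hmi; rewrite /cheb_term bin_small ?mulr0 ?mul0r //; lia. Qed.

(* Pascal's rule for the terms. *)
Lemma cheb_term_rec m i :
  cheb_term m.+2 i.+1 = t * cheb_term m.+1 i.+1 - d * cheb_term m i.
Proof.
have [Him|Hmi] := leqP i m; last by rewrite !cheb_term_small ?doubleS //; [ring | lia..].
rewrite /cheb_term (_ : (m.+2 - i.+1 = (m - i).+1)%N); last lia.
rewrite (_ : (m.+1 - i.+1 = m - i)%N); last lia.
rewrite (_ : (m.+2 - (i.+1).*2 = m - i.*2)%N); last by rewrite doubleS; lia.
rewrite binS natrD; have [Hm|Hm] := leqP i.*2.+1 m.
  by rewrite (_ : (m - i.*2 = (m.+1 - (i.+1).*2).+1)%N) ?exprS; [ring | rewrite doubleS; lia].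
by rewrite (@bin_small (m - i) i.+1) ?exprS; [ring | lia].
Qed.

Lemma Ucheb1 : Ucheb 1 t d = 1.
Proof. by rewrite /Ucheb /= big_ord1 bin0 !mulr1. Qed.

(* Extending the summation range of U_(m+1) adds only vanishing terms. *)
Lemma Ucheb_terms m : Ucheb m.+1 t d = \sum_(i < m.+1) cheb_term m i.
Proof.
have Hle : (m./2.+1 <= m.+1)%N by rewrite ltnS leq_half_double; lia.
rewrite /Ucheb /= (big_ord_widen _ (cheb_term m) Hle) big_mkcond /=.
apply: eq_bigr => i _; case: ifP => // /negbT; rewrite -leqNgt ltn_half_double => Hi.
by rewrite cheb_term_small.
Qed.

Lemma Ucheb_rec m : Ucheb m.+2 t d = t * Ucheb m.+1 t d - d * Ucheb m t d.
Proof.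
case: m => [|m].
  rewrite Ucheb1 Ucheb_terms !big_ord_recr big_ord0 /= cheb_term0 cheb_term_small //.
  by rewrite /Ucheb; ring.
rewrite !Ucheb_terms big_ord_recl cheb_term0.
under eq_bigr do rewrite cheb_term_rec.
rewrite sumrB -!mulr_sumr (big_ord_recl m.+1 (cheb_term m.+1)) cheb_term0.
rewrite (big_ord_recr m.+1 (cheb_term m)) (big_ord_recr m.+1 (fun i => cheb_term m.+1 i.+1)) /=.
rewrite (_ : \sum_(i < m.+1) cheb_term m.+1 (bump 0 i) = \sum_(i < m.+1) cheb_term m.+1 i.+1) //.
by rewrite !cheb_term_small ?doubleS ?exprS //; [ring | lia..].
Qed.

Lemma cheb_closed (s : nat -> K) : is_rsol (fun=> t) (fun=> - d) s ->
  forall m, s m.+1 = Ucheb m.+1 t d * s 1%N - d * Ucheb m t d * s 0%N.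
Proof.
move=> Hs; apply: (rsol_unique (is_rsol_shift 1 Hs)).
- by move=> m; rewrite (Ucheb_rec m.+1) (Ucheb_rec m); ring.
- by rewrite Ucheb1 /Ucheb; ring.
- by rewrite Hs (Ucheb_rec 0) Ucheb1 /Ucheb; ring.
Qed.

End Chebyshev.

(* Subsets of 'I_N are handled through their membership predicate memn S on
   nat, which vanishes from N on; sums over subsets then become sums over such
   predicates, independently of the ambient N. *)
Definition supported_below (N : nat) (p : nat -> bool) := forall j, (N <= j)%N -> p j = false.

Lemma memn_val N (S : {set 'I_N}) (i : 'I_N) : memn S i = (i \in S).
Proof.
apply/existsP/idP => [[j /andP [Hj /eqP /val_inj <-]] // | Hi].
by exists i; rewrite Hi eqxx.
Qed.

Lemma memn_lt N (S : {set 'I_N}) j : memn S j -> (j < N)%N.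
Proof. by rewrite /memn => /existsP [i /andP [_ /eqP <-]]; apply: ltn_ord. Qed.

Lemma memn_supported N (S : {set 'I_N}) : supported_below N (memn S).
Proof. by move=> j Hj; apply/negbTE/negP => /memn_lt; lia. Qed.

Lemma memn_set N (p : pred nat) j : memn [set i : 'I_N | p i] j = p j && (j < N)%N.
Proof.
apply/existsP/idP => [[i /andP [Hi /eqP <-]] | /andP [Hp Hj]].
  by rewrite inE in Hi; rewrite Hi ltn_ord.
by exists (Ordinal Hj); rewrite inE /= Hp eqxx.
Qed.

Lemma memn0 N j : memn (set0 : {set 'I_N}) j = false.
Proof. by apply/existsP => -[i]; rewrite inE. Qed.

Lemma memn_inj N (S S' : {set 'I_N}) : memn S =1 memn S' -> S = S'.
Proof. by move=> H; apply/setP => i; rewrite -!memn_val H. Qed.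

Definition widen_set N (T : {set 'I_N}) : {set 'I_N.+1} := [set j : 'I_N.+1 | memn T j].
Definition add_top N (T : {set 'I_N}) : {set 'I_N.+1} :=
  [set j : 'I_N.+1 | (val j == N) || memn T j].
Definition restrict_set N (S : {set 'I_N.+1}) : {set 'I_N} := [set i : 'I_N | memn S i].

Lemma memn_widen N (T : {set 'I_N}) : memn (widen_set T) =1 memn T.
Proof.
move=> j; rewrite /widen_set (memn_set _ (memn T)).
by apply/andb_idr => /memn_lt; lia.
Qed.

Lemma memn_add_top N (T : {set 'I_N}) j : memn (add_top T) j = (j == N) || memn T j.
Proof.
rewrite /add_top (memn_set _ (fun i => (i == N) || memn T i)).
by apply/andb_idr => /orP [/eqP -> // | /memn_lt]; lia.
Qed.

Lemma memn_restrict N (S : {set 'I_N.+1}) j : memn (restrict_set S) j = memn S j && (j < N)%N.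
Proof. exact: (memn_set _ (memn S)). Qed.

Lemma sum_subsets_split N (V : nmodType) (F : (nat -> bool) -> V) :
  (forall p q, p =1 q -> F p = F q) ->
  \sum_(S : {set 'I_N.+1}) F (memn S) =
  \sum_(T : {set 'I_N}) (F (memn T) + F (fun j => (j == N) || memn T j)).
Proof.
move=> F_ext; rewrite (bigID (fun S : {set 'I_N.+1} => ord_max \in S)) /= addrC big_split /=.
have memN (S : {set 'I_N.+1}) : memn S N = (ord_max \in S) by rewrite -memn_val.
congr (_ + _).
  rewrite (reindex_onto (@widen_set N) (@restrict_set N)) /=; last first.
    move=> S HS; apply: memn_inj => j; rewrite memn_widen memn_restrict.
    case H: (memn S j) => //=; have := memn_lt H; rewrite ltnS leq_eqVlt.
    by case/orP => [/eqP Ej|//]; move: H HS; rewrite Ej memN => ->.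
  apply: eq_big => [T|T _]; last by apply: F_ext; apply: memn_widen.
  rewrite -memN memn_widen memn_supported //=; apply/eqP/memn_inj => j.
  by rewrite memn_restrict memn_widen; case H: (memn T j); rewrite ?(memn_lt H).
rewrite (reindex_onto (@add_top N) (@restrict_set N)) /=; last first.
  move=> S HS; apply: memn_inj => j; rewrite memn_add_top memn_restrict.
  case: eqP => [-> |Hj]; first by rewrite memN.
  by case H: (memn S j) => //=; have := memn_lt H; move/eqP: Hj; lia.
apply: eq_big => [T|T _]; last by apply: F_ext; apply: memn_add_top.
rewrite -memN memn_add_top eqxx /=; apply/eqP/memn_inj => j.
rewrite memn_restrict memn_add_top; case: eqP => [-> | _] /=.
  by rewrite ltnn memn_supported.
by case H: (memn T j); rewrite ?(memn_lt H).
Qed.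

Lemma forall_supportedP N (p Q : nat -> bool) : supported_below N p ->
  reflect (forall j, p j -> Q j) [forall j : 'I_N, p j ==> Q j].
Proof.
move=> Hp; apply: (iffP forallP) => H j; last exact/implyP/H.
by case: (ltnP j N) => [Hj|/Hp ->] //; apply/implyP/(H (Ordinal Hj)).
Qed.

Lemma supported_weaken N N' p : (N <= N')%N -> supported_below N p -> supported_below N' p.
Proof. by move=> HN Hp j Hj; apply: Hp; lia. Qed.

Section NonConsecutiveSums.
Variable K : comPzRingType.
Variables x y : nat -> K.

Definition admissible (l h N : nat) (p : nat -> bool) : bool :=
  [forall j : 'I_N, p j ==> (l <= j < h)%N] && [forall j : 'I_N, p j ==> ~~ p j.+1].

Lemma admissibleP l h N p : supported_below N p ->
  reflect ((forall j, p j -> (l <= j < h)%N) /\ (forall j, p j -> ~~ p j.+1))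
          (admissible l h N p).
Proof.
move=> Hp; apply: (iffP andP) => -[H1 H2]; split.
- exact/(forall_supportedP (fun j => l <= j < h)%N Hp).
- exact/(forall_supportedP (fun j => ~~ p j.+1) Hp).
- exact/(forall_supportedP (fun j => l <= j < h)%N Hp).
- exact/(forall_supportedP (fun j => ~~ p j.+1) Hp).
Qed.

Definition weight (l h N : nat) (p : nat -> bool) : K :=
  if admissible l h N p then
    (\prod_(0 <= j < N | p j) y j) * \prod_(l <= j < h.+1 | ~~ p j && ~~ p j.-1) x j
  else 0.

(* Sum of the weights of the admissible subsets of 'I_N; alpha and beta are
   instances of it. *)
Definition ncsum (l N h : nat) : K :=
  \sum_(S : {set 'I_N} | [forall i in S, (l <= val i < h)%N] && nocons S)
     (\prod_(i in S) y (val i)) *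
     \prod_(l <= j < h.+1 | ~~ memn S j && ~~ memn S j.-1) x j.

Lemma weight_ext l h N p q : p =1 q -> weight l h N p = weight l h N q.
Proof.
move=> E; rewrite /weight.
have -> : admissible l h N p = admissible l h N q.
  by congr (_ && _); apply: eq_forallb => j; rewrite !E.
by congr (if _ then _ * _ else _); apply: eq_bigl => j; rewrite !E.
Qed.

Lemma ncsum_weight l N h : ncsum l N h = \sum_(S : {set 'I_N}) weight l h N (memn S).
Proof.
rewrite /ncsum big_mkcond; apply: eq_bigr => S _; rewrite /weight /admissible.
have -> : [forall i in S, (l <= val i < h)%N] = [forall j : 'I_N, memn S j ==> (l <= j < h)%N].
  by apply: eq_forallb => j; rewrite memn_val.
have -> : nocons S = [forall j : 'I_N, memn S j ==> ~~ memn S j.+1].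
  apply: eq_forallb => i; rewrite memn_val; case: (i \in S) => //=.
  by rewrite /memn negb_exists; apply: eq_forallb => j; case: (j \in S).
by case: ifP => // _; rewrite big_mkord; congr (_ * _); apply: eq_bigl => j; rewrite memn_val.
Qed.

Lemma weight_widen l h N N' p : (N <= N')%N -> supported_below N p ->
  weight l h N' p = weight l h N p.
Proof.
move=> HN Hp; have Hp' := supported_weaken HN Hp; rewrite /weight.
have -> : admissible l h N' p = admissible l h N p.
  exact/(sameP (admissibleP l h Hp'))/admissibleP.
case: ifP => // _; congr (_ * _).
rewrite (@big_cat_nat _ _ _ N 0 N' _ _ (leq0n N) HN) /= [X in _ * X]big1_seq ?mulr1 //.
by move=> j /andP [Pj]; rewrite mem_index_iota => /andP [/Hp Hj _]; rewrite Hj in Pj.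
Qed.

(* Subsets of [l, h) containing the top point N >= h are not admissible. *)
Lemma ncsum_narrow l N h : (h <= N)%N -> ncsum l N.+1 h = ncsum l N h.
Proof.
move=> HhN; rewrite !ncsum_weight sum_subsets_split; last exact: weight_ext.
apply: eq_bigr => T _; have HT := memn_supported T.
have Hq : supported_below N.+1 (fun j => (j == N) || memn T j).
  by move=> j Hj; rewrite HT; [apply/eqP; lia | lia].
have -> : weight l h N.+1 (fun j => (j == N) || memn T j) = 0.
  rewrite /weight; case: (admissibleP l h Hq) => // -[Hlh _].
  by have := Hlh N; rewrite eqxx => /(_ isT); lia.
by rewrite addr0 (weight_widen _ _ (leqnSn N) HT).
Qed.

Section TopPoint.
Variables l h : nat.
Hypothesis l_le : (l <= h.+1)%N.
Variable p : nat -> bool.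
Hypothesis p_supp : supported_below h.+1 p.

(* Subsets of [l, h+2) not containing h+1: the point h+2 is uncovered. *)
Lemma weight_top_out : weight l h.+2 h.+2 p = x h.+2 * weight l h.+1 h.+1 p.
Proof.
rewrite (weight_widen _ _ (leqnSn h.+1) p_supp) /weight.
have -> : admissible l h.+2 h.+1 p = admissible l h.+1 h.+1 p.
  by congr (_ && _); apply: eq_forallb => j; rewrite (leqW (ltn_ord j)) (ltn_ord j).
case: ifP => _; last by rewrite mulr0.
rewrite [X in _ * X = _]big_mkcond [X in _ = _ * (_ * X)]big_mkcond.
by rewrite [X in _ * X = _]big_nat_recr /= ?p_supp //=; [ring | lia].
Qed.

Let q j := (j == h.+1) || p j.

Lemma q_supp : supported_below h.+2 q.
Proof. by move=> j Hj; rewrite /q p_supp; [apply/eqP; lia | lia]. Qed.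

Lemma admissible_top_in : admissible l h.+2 h.+2 q = admissible l h h.+1 p.
Proof.
apply/(admissibleP _ _ q_supp)/(admissibleP _ _ p_supp) => -[H1 H2]; split.
- move=> j Pj; have Qj : q j by rewrite /q Pj orbT.
  have [Ej|Nj] := eqVneq j h; first by have := H2 j Qj; rewrite /q Ej eqxx.
  have Hj : (j < h.+1)%N by rewrite ltnNge; apply/negP => /p_supp; rewrite Pj.
  by have := H1 j Qj; move/eqP: Nj; lia.
- by move=> j Pj; have := H2 j; rewrite /q Pj orbT negb_or => /(_ isT) /andP [].
- move=> j /orP [/eqP -> | /H1]; lia.
- move=> j /orP [/eqP -> | Pj]; first by rewrite /q p_supp // orbF; apply/eqP; lia.
  have := H1 j Pj; rewrite /q negb_or H2 // andbT => ?; apply/eqP; lia.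
Qed.

(* Subsets of [l, h+2) containing h+1: they avoid h, and h+1, h+2 are covered. *)
Lemma weight_top_in : weight l h.+2 h.+2 q = y h.+1 * weight l h h.+1 p.
Proof.
rewrite /weight admissible_top_in; case: ifP => _; last by rewrite mulr0.
have -> : \prod_(0 <= j < h.+2 | q j) y j = y h.+1 * \prod_(0 <= j < h.+1 | p j) y j.
  rewrite big_mkcond big_nat_recr //= {2}/q eqxx /= mulrC; congr (_ * _).
  rewrite [RHS]big_mkcond; apply: eq_big_nat => j /andP [_ Hj].
  by rewrite /q (_ : (j == h.+1) = false) //; apply/eqP; lia.
have -> : \prod_(l <= j < h.+3 | ~~ q j && ~~ q j.-1) x j =
          \prod_(l <= j < h.+1 | ~~ p j && ~~ p j.-1) x j.
  rewrite big_mkcond big_nat_recr /=; last lia.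
  rewrite big_nat_recr /=; last lia.
  have Qh : q h.+1 by rewrite /q eqxx.
  rewrite Qh /= andbF !mulr1 [RHS]big_mkcond; apply: eq_big_nat => j /andP [_ Hj].
  have [Ej Ej'] : (j == h.+1) = false /\ (j.-1 == h.+1) = false by split; apply/eqP; lia.
  by rewrite /q Ej Ej'.
by rewrite mulrA.
Qed.

End TopPoint.

Lemma ncsum_rec l h : (l <= h.+1)%N ->
  ncsum l h.+2 h.+2 = x h.+2 * ncsum l h.+1 h.+1 + y h.+1 * ncsum l h.+1 h.
Proof.
move=> Hl; rewrite !ncsum_weight sum_subsets_split; last exact: weight_ext.
rewrite big_split !mulr_sumr; congr (_ + _); apply: eq_bigr => T _.
  exact: weight_top_out (memn_supported T).
exact: weight_top_in (memn_supported T).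
Qed.

(* Below l only the empty subset is admissible. *)
Lemma ncsum_small l N h : (h <= l)%N -> ncsum l N h = \prod_(l <= j < h.+1) x j.
Proof.
move=> Hhl; rewrite /ncsum (big_pred1 set0) => [|S /=].
  by rewrite big_set0 mul1r; apply: eq_bigl => j; rewrite !memn0.
apply/andP/eqP => [[/forallP H _] | ->]; last by split; apply/forallP => i; rewrite inE.
by apply/setP => i; rewrite inE; apply/negbTE/negP => Hi; have := H i; rewrite Hi /=; lia.
Qed.

Definition cont (l h : nat) : K := ncsum l h.+1 h.

Lemma cont_rec l h : (l <= h.+1)%N ->
  cont l h.+2 = x h.+2 * cont l h.+1 + y h.+1 * cont l h.
Proof.
move=> Hl; rewrite /cont !(ncsum_narrow l (leqnn _)) ncsum_rec //.
by rewrite (ncsum_narrow l (leqnn h)).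
Qed.

Lemma cont_empty l : (0 < l)%N -> cont l l.-1 = 1.
Proof. by move=> Hl; rewrite /cont ncsum_small ?leq_pred // prednK // big_geq. Qed.

Lemma cont_single l : cont l l = x l.
Proof. by rewrite /cont ncsum_small // big_nat1. Qed.

End NonConsecutiveSums.

Section ContinuantRecurrence.
Variable K : comPzRingType.
Variables x y X Y : nat -> K.
Hypothesis X_x : forall n, X n = x n.+1.
Hypothesis Y_y : forall n, (0 < n)%N -> Y n = y n.

Lemma cont1_rsol h : cont x y 1 h = rsol X Y 0 1 h.+1.
Proof.
apply: (rsol_unique _ (is_rsol_shift 1 (rsolP X Y 0 1))) => [n||].
- by rewrite cont_rec // X_x Y_y.
- by rewrite cont_empty.
- by rewrite cont_single /rsol /= X_x; ring.
Qed.

(* alpha(r, k) and alpha(r - 1, k) are consecutive values of A, both for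
   r <= k (closed form) and r > k (defining recursion). *)
Lemma alpha_pair_rsol k r : alpha_pair x y k r = (rsol X Y 0 1 r.+1, rsol X Y 0 1 r).
Proof.
elim: r => [|r IH] /=; first exact: (congr1 (pair^~ 0) (cont1_rsol 0)).
case: ifP => _; first by rewrite -!cont1_rsol.
rewrite IH /= rsolP X_x; congr (_ + _, _).
by case: r {IH} => [|r]; [rewrite /rsol /= !mulr0 | rewrite Y_y].
Qed.

Lemma beta_rsol k r : Y 0%N = y k -> (0 < r)%N -> beta_base x y k r = rsol X Y 1 0 r.
Proof.
move=> Y0; case: r => [|[|r]] // _.
have -> : beta_base x y k r.+2 = y k * cont x y 2 r.+1.
  rewrite /beta_base /= /cont -(ncsum_narrow x y 2 (leqnSn r.+1)) /ncsum big_distrr /=.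
  by apply: eq_bigr => S _; rewrite mulrA.
pose f j := y k * cont x y 2 j.+1.
apply: (@rsol_unique _ _ _ f _ _ (is_rsol_shift 2 (rsolP X Y 1 0))) => [n||].
- by rewrite /f cont_rec // X_x Y_y //; ring.
- by rewrite /f cont_empty // /rsol /= Y0; ring.
- by rewrite /f cont_single /rsol /= X_x Y0 Y_y //; ring.
Qed.

End ContinuantRecurrence.

Lemma bump_small h i : (i < h)%N -> bump h i = i.
Proof. by move=> Hi; rewrite /bump leqNgt Hi. Qed.

Lemma bump_self h : bump h h = h.+1.
Proof. by rewrite /bump leqnn. Qed.

Lemma cofactor_max (R : comPzRingType) n (M : 'M[R]_n.+1) :
  cofactor M ord_max ord_max = \det (row' ord_max (col' ord_max M)).
Proof. by rewrite /cofactor addnn -mul2n exprM sqrrN !expr1n mul1r. Qed.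

Lemma det_last_col (R : comPzRingType) n (M : 'M[R]_n.+1) :
  (forall i : 'I_n, M (widen_ord (leqnSn n) i) ord_max = 0) ->
  \det M = M ord_max ord_max * \det (row' ord_max (col' ord_max M)).
Proof.
move=> M0; rewrite (expand_det_col _ ord_max) big_ord_recr /= big1 ?add0r.
  by rewrite cofactor_max.
by move=> i _; rewrite M0 mul0r.
Qed.

Section Tridiagonal.
Variable K : comPzRingType.
Variables (k : nat) (a b c : k.-tuple K).

Lemma Tmat_minor_last n : row' ord_max (col' ord_max (Tmat a b c n.+1)) = Tmat a b c n.
Proof. by apply/matrixP => i j; rewrite !mxE /= !bump_small. Qed.

Lemma Tmat_last_row n (j : 'I_n.+2) : Tmat a b c n.+2 ord_max j =
  if val j == n.+1 then per a n.+2 else if val j == n then per c n.+1 else 0.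
Proof.
rewrite mxE /= eqSS ![_ == val j]eq_sym (_ : (val j == n.+2) = false) /=.
  by case: (val j =P n) => [->|].
by apply/negbTE; rewrite neq_ltn ltn_ord.
Qed.

(* Removing the last row and the column n of T_(n+2) leaves a matrix whose
   last column is (0, ..., 0, b_(n+1)) and whose leading minor is T_n. *)
Lemma Tmat_cofactor_subdiag n :
  cofactor (Tmat a b c n.+2) ord_max (widen_ord (leqnSn n.+1) ord_max)
  = - (per b n.+1 * \det (Tmat a b c n)).
Proof.
rewrite /cofactor /= addSn addnn -mul2n exprS exprM sqrrN !expr1n mulr1 mulN1r.
rewrite det_last_col => [|i]; last first.
  rewrite !mxE /= (bump_small (leqW (ltn_ord i))).
  by rewrite bump_self !ifF //; apply/eqP; have := ltn_ord i; lia.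
congr (- (_ * _)).
  by rewrite !mxE /= bump_self bump_small // eqxx ifF //; apply/eqP; lia.
congr (\det _); apply/matrixP => i j; rewrite !mxE /=.
by rewrite !bump_small // ?(leqW (ltn_ord _)).
Qed.

Lemma det_Tmat_rec n : \det (Tmat a b c n.+2) =
  per a n.+2 * \det (Tmat a b c n.+1) - per b n.+1 * per c n.+1 * \det (Tmat a b c n).
Proof.
rewrite (expand_det_row _ ord_max) big_ord_recr big_ord_recr /= big1 ?add0r => [|i _].
  rewrite !Tmat_last_row /= !eqxx (ltn_eqF (ltnSn n)) Tmat_cofactor_subdiag.
  by rewrite (cofactor_max (Tmat a b c n.+2)) (Tmat_minor_last n.+1); ring.
by rewrite Tmat_last_row /= !ifF ?mul0r //; apply/eqP; have := ltn_ord i; lia.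
Qed.

End Tridiagonal.

Section PeriodicTridiagonal.
Variable K : comPzRingType.
Variables (k : nat) (a b c : k.-tuple K).
Hypothesis k_gt0 : (0 < k)%N.

(* per v is k-periodic from index 1 on (per v 0 = v_1, not v_k). *)
Lemma per_period (v : k.-tuple K) n : (0 < n)%N -> per v (n + k) = per v n.
Proof. by move=> Hn; rewrite /per (_ : (n + k).-1 = n.-1 + k)%N ?modnDr //; lia. Qed.

Definition dcoef (i : nat) : K := per b i * per c i.
Definition dtot : K := \prod_(1 <= i < k.+1) dcoef i.
Local Notation x := (per a).
Local Notation md := (fun i => - dcoef i).

(* Coefficients of the recurrence indexed so that det T_n = A (n + 1);
   Yc 0 = - d_k is forced by periodicity. *)
Definition Xc (j : nat) : K := per a j.+1.
Definition Yc (j : nat) : K := - dcoef (j + k).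
Local Notation A := (rsol Xc Yc 0 1).
Local Notation B := (rsol Xc Yc 1 0).

Lemma dcoef_period i : (0 < i)%N -> dcoef (i + k) = dcoef i.
Proof. by move=> Hi; rewrite /dcoef !per_period. Qed.

Lemma Xc_period j : Xc (j + k) = Xc j.
Proof. by rewrite /Xc -addSn per_period. Qed.

Lemma Yc_period j : Yc (j + k) = Yc j.
Proof. by rewrite /Yc dcoef_period //; lia. Qed.

Lemma Yc_pos j : (0 < j)%N -> Yc j = md j.
Proof. by move=> Hj; rewrite /Yc dcoef_period. Qed.

Lemma det_Tmat_A n : \det (Tmat a b c n) = A n.+1.
Proof.
pose detT j := \det (Tmat a b c j).
apply: (@rsol_unique _ _ _ detT _ _ (is_rsol_shift 1 (rsolP Xc Yc 0 1))) => [j||].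
- by rewrite /detT det_Tmat_rec /= Yc_pos // /Xc /dcoef; ring.
- by rewrite /detT det_mx00.
- by rewrite /detT det_mx11 mxE /rsol /= /Xc; ring.
Qed.

Lemma alpha_A r : alpha x md k r = A r.+1.
Proof. by rewrite /alpha (alpha_pair_rsol (X := Xc) (Y := Yc)) // => j /Yc_pos. Qed.

Lemma det_Tmat_alpha r : \det (Tmat a b c r) = alpha x md k r.
Proof. by rewrite det_Tmat_A alpha_A. Qed.

Lemma pi_AB : pi_ x md k k = A k.+1 + B k.
Proof. by rewrite /pi_ alpha_A (beta_rsol (X := Xc) (Y := Yc)) // => j /Yc_pos. Qed.

Lemma casor_dcoef j : casor Xc Yc j.+1 = dcoef k * \prod_(1 <= i < j.+1) dcoef i.
Proof.
rewrite casor_prod big_nat_recl // /Yc opprK big_add1 /=; congr (_ * _).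
by apply: eq_big_nat => i _; rewrite opprK dcoef_period.
Qed.

Lemma dtot_casor : dtot = casor Xc Yc k.
Proof. by rewrite -(prednK k_gt0) casor_dcoef /dtot prednK // big_nat_recr // mulrC. Qed.

Lemma det_Tmat_residue_rsol r :
  is_rsol (fun=> pi_ x md k k) (fun=> - dtot) (fun j => \det (Tmat a b c (j * k + r))).
Proof.
move=> j; rewrite !det_Tmat_A pi_AB dtot_casor.
have -> : ((j.+2 * k + r).+1 = (j * k + r).+1 + k + k)%N by lia.
have -> : ((j.+1 * k + r).+1 = (j * k + r).+1 + k)%N by lia.
by rewrite (period_step Xc_period Yc_period); ring.
Qed.

Local Notation U i := (Ucheb i (pi_ x md k k) dtot).

(* First formula of the theorem, with n = (m + 1) k + r. *)
Lemma det_Tmat_formula1 m r : \det (Tmat a b c (m.+1 * k + r)) =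
  U m.+1 * alpha x md k (k + r) - dtot * U m * alpha x md k r.
Proof.
rewrite (cheb_closed (det_Tmat_residue_rsol r)) -!det_Tmat_alpha.
by rewrite mul1n mul0n add0n.
Qed.

(* The defect of alpha(., k) from periodicity, via the Casoratian. *)
Lemma alpha_period_defect r : (r < k)%N ->
  alpha x md k (k + r) - pi_ x md k k * alpha x md k r =
  dcoef k * (\prod_(1 <= i < r.+1) dcoef i)
    * alpham1 (shiftn x r.+1) (shiftn md r.+1) k (k - r - 1).
Proof.
move=> r_lt_k.
(* alpha_(r+1)(k - r - 2, k) is the fundamental solution of the recurrence
   shifted by r + 1, evaluated at k - r - 1. *)
have -> : alpham1 (shiftn x r.+1) (shiftn md r.+1) k (k - r - 1) =
          rsol (fun j => Xc (r.+1 + j)) (fun j => Yc (r.+1 + j)) 0 1 (k - r - 1).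
  rewrite /alpham1 (alpha_pair_rsol (X := fun j => Xc (r.+1 + j)) (Y := fun j => Yc (r.+1 + j))) //.
    by move=> j; rewrite /Xc /shiftn addnS.
  by move=> j _; rewrite Yc_pos.
rewrite -casor_dcoef -casor_shift (_ : (r.+1 + (k - r - 1) = k)%N); last lia.
rewrite !alpha_A pi_AB (_ : ((k + r).+1 = r.+1 + k)%N); last lia.
by rewrite (fund_shift_period Xc_period Yc_period); ring.
Qed.

(* Second formula of the theorem, with n = (m + 1) k + r and r < k. *)
Lemma det_Tmat_formula2 m r : (r < k)%N -> \det (Tmat a b c (m.+1 * k + r)) =
  U m.+2 * alpha x md k r + dcoef k * (\prod_(1 <= i < r.+1) dcoef i) * U m.+1
    * alpham1 (shiftn x r.+1) (shiftn md r.+1) k (k - r - 1).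
Proof.
move=> r_lt_k; set D := alpham1 _ _ _ _.
rewrite -[_ * U m.+1 * D]mulrA [U m.+1 * D]mulrC mulrA -alpha_period_defect //.
by rewrite det_Tmat_formula1 Ucheb_rec; ring.
Qed.

End PeriodicTridiagonal.

Unset Implicit Arguments.

Theorem theorem5p4 (K : comPzRingType) (k n : nat) (a b c : k.-tuple K) :
  (0 < k)%N -> (k < n)%N ->
  let dd := fun i => per b i * per c i in
  let md := fun i => - dd i in
  let x := per a in
  let d := \prod_(1 <= i < k.+1) dd i in
  let U := fun i => Ucheb i (pi_ x md k k) d in
  let m := (n %/ k)%N in
  let r := (n %% k)%N in
  [/\ \det (Tmat a b c n)
        = U m * alpha x md k (k + r) - d * U m.-1 * alpha x md k r,
      \det (Tmat a b c n)
        = U m.+1 * alpha x md k r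
          + dd k * (\prod_(1 <= i < r.+1) dd i) * U m
            * alpham1 (shiftn x r.+1) (shiftn md r.+1) k (k - r - 1)
    & r = k.-1 ->
      \det (Tmat a b c n) = U m.+1 * \det (Tmat a b c k.-1)
      /\ U m.+1 * \det (Tmat a b c k.-1) = U m.+1 * alpha x md k k.-1].
Proof.
move=> k_gt0 k_lt_n dd md x d U m r.
have r_lt_k : (r < k)%N by rewrite ltn_mod.
have m_gt0 : (0 < m)%N by rewrite divn_gt0 // ltnW.
have n_eq : n = (m.-1.+1 * k + r)%N by rewrite prednK //; apply: divn_eq.
have formula1 := det_Tmat_formula1 a b c k_gt0 m.-1 r.
have formula2 := det_Tmat_formula2 a b c k_gt0 m.-1 r_lt_k.
rewrite -n_eq prednK // in formula1 formula2.
(* For r = k - 1 the correction term involves alpha(-1, k) = 0. *)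
split=> // r_eq; rewrite formula2 (det_Tmat_alpha a b c k_gt0) -r_eq.
have -> : (k - r - 1 = 0)%N by lia.
by rewrite [alpham1 _ _ _ 0]/alpham1 /= mulr0 addr0.
Qed.
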